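(* Let $\Lambda$ be a finite-dimensional algebra over a field of characteristic $p>0$, and let ${\bf T}(\Lambda)=\Lambda\ltimes\Lambda^*$ be its trivial extension. (1) $T_0({\bf T}(\Lambda))^\perp=Z({\bf T}(\Lambda))=Z(\Lambda)\ltimes \operatorname{Ann}_{\Lambda^*}(K(\Lambda))$. (2) For all $n\ge 1$, $T_n({\bf T}(\Lambda))^{\perp} = 0 \ltimes \operatorname{Ann}_{\Lambda^*}(T_n(\Lambda))$. (3) For all $n\ge 1$, $T_n(Z({\bf T}(\Lambda)))^\perp/K({\bf T}(\Lambda))= 0\ltimes \left(\operatorname{Ann}_{\Lambda^*}(T_n(Z(\Lambda)))/[\Lambda,\Lambda^*]\right)$. (4) For all $n\ge 1$, $P_n(Z({\bf T}(\Lambda)))^\perp/K({\bf T}(\Lambda))= \Lambda/K(\Lambda)\ltimes \left(\operatorname{Ann}_{\Lambda^*}(P_n(Z(\Lambda)))/[\Lambda,\Lambda^*]\right)$.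
   Context: For a finite-dimensional algebra $A$ over a field $k$ of characteristic $p>0$: $K(A)$ is the $k$-subspace spanned by all commutators $ab-ba$, $Z(A)$ is the center, and $T_n(A)=\{x\in A\mid x^{p^n}\in K(A)\}$ for $n\ge 0$ (so $T_0(A)=K(A)$). For $\Lambda$ finite-dimensional, $\Lambda^*=\operatorname{Hom}_k(\Lambda,k)$ is a $\Lambda$-$\Lambda$-bimodule via $(a\varphi)(b)=\varphi(ba)$, $(\varphi a)(b)=\varphi(ab)$; the trivial extension ${\bf T}(\Lambda)=\Lambda\ltimes\Lambda^*$ has multiplication $(a,\varphi)(b,\psi)=(ab,a\psi+\varphi b)$ and is a symmetric algebra with symmetrizing form $\langle (a,\varphi),(b,\psi)\rangle=\psi(a)+\varphi(b)$ (coming from $\pi(a,\varphi)=\varphi(1)$). For a subspace $M$ of ${\bf T}(\Lambda)$, $M^\perp$ denotes its orthogonal space with respect to this form. For a subspace $V\le\Lambda$, $\operatorname{Ann}_{\Lambda^*}(V)=\{\varphi\in\Lambda^*\mid \varphi(V)=0\}$. $[\Lambda,\Lambda^*]$ is the subspace of $\Lambda^*$ spanned by all $a\varphi-\varphi a$ with $a\in\Lambda$, $\varphi\in\Lambda^*$. For a commutative algebra $Z$, $P_n(Z)$ is the subspace spanned by all $z^{p^n}$, $z\in Z$, and $T_n(Z)=\{z\in Z\mid z^{p^n}=0\}$. In (3) and (4), $T_n(Z({\bf T}(\Lambda)))^\perp$ and $P_n(Z({\bf T}(\Lambda)))^\perp$ are orthogonal spaces in ${\bf T}(\Lambda)$ (they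 contain $K({\bf T}(\Lambda))$), and $K({\bf T}(\Lambda))=K(\Lambda)\ltimes[\Lambda,\Lambda^*]$. *)

From HB Require Import structures.
From mathcomp Require Import all_boot all_order all_algebra all_field.
Set Implicit Arguments. Unset Strict Implicit. Unset Printing Implicit Defensive.
Import GRing.Theory.
Local Open Scope ring_scope.

Section Defs.
Variable F : fieldType.

Definition span_of (V : lmodType F) (P : V -> Prop) (x : V) : Prop :=
  exists s : seq (F * V), (forall c, c \in s -> P c.2) /\
                          x = \sum_(c <- s) c.1 *: c.2.

(* "M/K = N/K": images of M and N in the quotient V/K coincide *)
Definition quot_eq (V : lmodType F) (K M N : V -> Prop) : Prop :=
  forall x, (exists2 m, M m & K (x - m)) <-> (exists2 m, N m & K (x - m)).

Variable L : falgType F.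

Definition Kcomm (x : L) : Prop := span_of (fun y => exists a b : L, y = a * b - b * a) x.
Definition Zc (x : L) : Prop := forall y : L, x * y = y * x.
Definition Tn (p n : nat) (x : L) : Prop := Kcomm (x ^+ (p ^ n)).
Definition TnZ (p n : nat) (z : L) : Prop := Zc z /\ z ^+ (p ^ n) = 0.
Definition PnZ (p n : nat) (x : L) : Prop :=
  span_of (fun y => exists2 z, Zc z & y = z ^+ (p ^ n)) x.

Definition dual := 'Hom(L, F^o).
Definition lact (a : L) (phi : dual) : dual := linfun (fun b : L => phi (b * a) : F^o).
Definition ract (phi : dual) (a : L) : dual := linfun (fun b : L => phi (a * b) : F^o).

Definition Ann (P : L -> Prop) (phi : dual) : Prop := forall v, P v -> phi v = 0.
Definition commLD (phi : dual) : Prop :=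
  span_of (fun y => exists (a : L) (psi : dual), y = lact a psi - ract psi a) phi.

Definition TE := (L * dual)%type.
Definition tmul (x y : TE) : TE := (x.1 * y.1, lact x.1 y.2 + ract x.2 y.1).
Definition tone : TE := (1, 0).
Definition tpow (x : TE) (m : nat) : TE := iter m (tmul x) tone.
Definition tform (x y : TE) : F := (y.2 x.1 : F) + (x.2 y.1 : F).
Definition perp (M : TE -> Prop) (y : TE) : Prop := forall x, M x -> tform x y = 0.

Definition KT (x : TE) : Prop := span_of (fun y => exists a b : TE, y = tmul a b - tmul b a) x.
Definition ZT (x : TE) : Prop := forall y : TE, tmul x y = tmul y x.
Definition TnT (p n : nat) (x : TE) : Prop := KT (tpow x (p ^ n)).
Definition TnZT (p n : nat) (z : TE) : Prop := ZT z /\ tpow z (p ^ n) = 0.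
Definition PnZT (p n : nat) (x : TE) : Prop :=
  span_of (fun y => exists2 z, ZT z & y = tpow z (p ^ n)) x.
End Defs.

From HB Require Import structures.
From mathcomp Require Import all_boot all_order all_algebra all_field.
From mathcomp Require Import zify ring.
Set Implicit Arguments. Unset Strict Implicit. Unset Printing Implicit Defensive.
Import GRing.Theory.
Local Open Scope ring_scope.

(* The trivial extension is a symmetric algebra: its form is associative,
   <[t, y], x> = <t, [y, x]>, and nondegenerate, so the orthogonal of its
   commutator space is its centre.  Everything else rests on the power formula
   (a, phi)^m = (a^m, sum_i a^i phi a^(m-1-i)): the second component is
   congruent to m (phi a^(m-1)) modulo [L, L^*], and equal to it when a is
   central.  When p divides m it therefore lies in [L, L^*], resp. vanishes.
   Hence T_n(T(L)) = T_n(L) x| L^* and central p^n-th powers are (z^(p^n), 0),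
   and the orthogonal spaces are computed coordinatewise, using that a
   subspace of L is its own double annihilator in L^*. *)

Section Spans.
Variable F : fieldType.

Section OneModule.
Variable V : lmodType F.
Implicit Types (P Q : V -> Prop) (x y : V).

Lemma span_ind P Q : Q 0 -> (forall x y, Q x -> Q y -> Q (x + y)) ->
  (forall k x, Q x -> Q (k *: x)) -> (forall x, P x -> Q x) ->
  forall x, span_of P x -> Q x.
Proof.
move=> Q0 QD QZ PQ x [s [Ps ->]].
elim: s Ps => [|c s IH] Ps; first by rewrite big_nil.
rewrite big_cons; apply: QD; first by apply/QZ/PQ/Ps; rewrite mem_head.
by apply: IH => d ds; apply: Ps; rewrite in_cons ds orbT.
Qed.

Lemma span0 P : span_of P 0.
Proof. by exists [::]; rewrite big_nil. Qed.

Lemma spanD P x y : span_of P x -> span_of P y -> span_of P (x + y).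
Proof.
move=> [s [Ps ->]] [t [Pt ->]]; exists (s ++ t); rewrite big_cat; split=> //.
by move=> c; rewrite mem_cat => /orP [/Ps|/Pt].
Qed.

Lemma spanZ P k x : span_of P x -> span_of P (k *: x).
Proof.
move=> [s [Ps ->]]; exists [seq (k * c.1, c.2) | c <- s]; split.
  by move=> c /mapP [d /Ps ? ->].
by rewrite big_map scaler_sumr; apply: eq_bigr => c _; rewrite scalerA.
Qed.

Lemma span_gen P x : P x -> span_of P x.
Proof.
move=> Px; exists [:: (1, x)]; rewrite big_seq1 scale1r.
by split=> // c; rewrite inE => /eqP ->.
Qed.

Lemma span_sum P I (r : seq I) (G : I -> V) :
  (forall i, span_of P (G i)) -> span_of P (\sum_(i <- r) G i).
Proof. by move=> PG; elim/big_ind: _ => //; [exact: span0 | exact: spanD]. Qed.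

Lemma quot_eq_of_equiv (K M N : V -> Prop) :
  (forall x, M x <-> N x) -> quot_eq K M N.
Proof. by move=> MN x; split=> -[m /MN]; exists m. Qed.
End OneModule.

Section LinearImage.
Variables (U V : lmodType F) (f : U -> V).
Hypothesis f_lin : linear f.

Let fL : {linear U -> V} := HB.pack f (GRing.isLinear.Build _ _ _ _ f f_lin).
Let f0 : f 0 = 0 := linear0 fL.
Let fD x y : f (x + y) = f x + f y := linearD fL x y.
Let fZ k x : f (k *: x) = k *: f x := linearZ_LR fL k x.

Lemma span_linear (P : U -> Prop) (Q : V -> Prop) :
  (forall x, P x -> span_of Q (f x)) -> forall x, span_of P x -> span_of Q (f x).
Proof.
move=> PQ; apply: span_ind => [||k x|//].
- by rewrite f0; exact: span0.
- by move=> x y Qx Qy; rewrite fD; exact: spanD.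
- by rewrite fZ; exact: spanZ.
Qed.

Lemma span_kernel (P : U -> Prop) :
  (forall x, P x -> f x = 0) -> forall x, span_of P x -> f x = 0.
Proof.
move=> Pf; apply: span_ind => [||k x|//] //.
- by move=> x y fx fy; rewrite fD fx fy addr0.
- by rewrite fZ => ->; rewrite scaler0.
Qed.
End LinearImage.

Lemma linfun_linearE (U V : vectType F) (f : U -> V) :
  linear f -> forall u, linfun f u = f u.
Proof.
by move=> f_lin; exact: (lfunE (HB.pack f (GRing.isLinear.Build _ _ _ _ f f_lin))).
Qed.
End Spans.

Section Dual.
Variables (F : fieldType) (L : falgType F).
Implicit Types (a b c : L) (phi psi : dual L).

Lemma lactE a phi b : lact a phi b = phi (b * a).
Proof.
by rewrite linfun_linearE // => k u v /=; rewrite mulrDl -scalerAl linearP.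
Qed.

Lemma ractE phi a b : ract phi a b = phi (a * b).
Proof.
by rewrite linfun_linearE // => k u v /=; rewrite mulrDr -scalerAr linearP.
Qed.

Lemma dual_vanish_eq0 c : (forall phi : dual L, phi c = 0) -> c = 0.
Proof.
move=> c0; rewrite (coord_vbasis (memvf c)); apply: big1 => i _.
have := c0 (linfun (coord (vbasis {:L}) i : L -> F^o)).
by rewrite lfunE /= => ->; rewrite scale0r.
Qed.

(* The functional [psi \o (1 - projv U)] kills [U] and detects [c - projv U c]. *)
Lemma dual_vanish_memv (U : {vspace L}) c :
  (forall phi : dual L, Ann (fun u => u \in U) phi -> phi c = 0) -> c \in U.
Proof.
move=> Uc; suff -> : c = projv U c by exact: memv_proj.
apply/eqP; rewrite -subr_eq0; apply/eqP/dual_vanish_eq0 => psi.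
have := Uc (psi \o (\1 - projv U))%VF; rewrite comp_lfunE add_lfunE opp_lfunE id_lfunE.
by apply=> u Uu; rewrite comp_lfunE add_lfunE opp_lfunE id_lfunE projv_id // subrr linear0.
Qed.

Definition Kspace : {vspace L} :=
  <<[seq a * b - b * a | a <- vbasis {:L}, b <- vbasis {:L}]>>%VS.

Lemma commutator_Kspace a b : a * b - b * a \in Kspace.
Proof.
pose e := vbasis {:L}.
have basis_left (i : 'I_(\dim {:L})) b' : e`_i * b' - b' * e`_i \in Kspace.
  rewrite (coord_vbasis (memvf b')) mulr_sumr mulr_suml -sumrB.
  apply: memv_suml => j _; rewrite -scalerAr -scalerAl -scalerBr.
  by apply/memvZ/memv_span/allpairsP; exists (e`_i, e`_j); rewrite !mem_nth ?size_tuple.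
rewrite (coord_vbasis (memvf a)) mulr_sumr mulr_suml -sumrB.
apply: memv_suml => i _; rewrite -scalerAr -scalerAl -scalerBr.
exact/memvZ/basis_left.
Qed.

Lemma KcommP x : Kcomm x <-> x \in Kspace.
Proof.
split.
  move: x; apply: span_ind; [exact: mem0v | exact: memvD | exact: memvZ |].
  by move=> _ [a [b ->]]; exact: commutator_Kspace.
move=> /(coord_span (X := in_tuple _)) ->; apply: span_sum => i; apply/spanZ/span_gen.
set s := [seq _ | a <- _, b <- _].
have /allpairsP [[a b] [_ _ ->]] : s`_i \in s by rewrite mem_nth.
by exists a, b.
Qed.

Lemma Kcomm_of_Ann c :
  (forall phi : dual L, Ann (@Kcomm F L) phi -> phi c = 0) -> Kcomm c.
Proof.
move=> Kc; apply/KcommP/dual_vanish_memv => phi KphiU; apply: Kc => x /KcommP.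
exact: KphiU.
Qed.

Lemma Ann_span (P : L -> Prop) phi : Ann P phi -> Ann (span_of P) phi.
Proof. by apply: span_kernel; exact: linearP. Qed.

End Dual.

Section TrivialExtension.
Variables (F : fieldType) (L : falgType F).
Implicit Types (a b c : L) (phi psi : dual L) (x y t : TE L).

Lemma lact_sum a I (r : seq I) (G : I -> dual L) :
  lact a (\sum_(i <- r) G i) = \sum_(i <- r) lact a (G i).
Proof.
apply: (big_morph (lact a)) => [phi psi|]; apply/lfunP => b;
  by rewrite lactE ?add_lfunE ?zero_lfunE ?lactE.
Qed.

Lemma lactM a b phi : lact (a * b) phi = lact a (lact b phi).
Proof. by apply/lfunP => c; rewrite !lactE mulrA. Qed.

Lemma ractM phi a b : ract (ract phi a) b = ract phi (a * b).
Proof. by apply/lfunP => c; rewrite !ractE mulrA. Qed.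

Lemma lact1 phi : lact 1 phi = phi.
Proof. by apply/lfunP => c; rewrite lactE mulr1. Qed.

Lemma ract1 phi : ract phi 1 = phi.
Proof. by apply/lfunP => c; rewrite ractE mul1r. Qed.

Lemma lactr0 a : lact a 0 = 0.
Proof. by apply/lfunP => c; rewrite lactE !zero_lfunE. Qed.

Lemma ract0r a : ract 0 a = 0.
Proof. by apply/lfunP => c; rewrite ractE !zero_lfunE. Qed.

Lemma lact0r phi : lact 0 phi = 0.
Proof. by apply/lfunP => c; rewrite lactE zero_lfunE mulr0 linear0. Qed.

Lemma ractr0 phi : ract phi 0 = 0.
Proof. by apply/lfunP => c; rewrite ractE zero_lfunE mul0r linear0. Qed.

Lemma tpow1 x : tpow x 1 = x.
Proof. by rewrite /tpow /= /tmul mulr1 lactr0 ract1 add0r; case: x. Qed.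

Lemma tpow_fst x m : (tpow x m).1 = x.1 ^+ m.
Proof. by elim: m => [|m IH] //=; rewrite IH exprS. Qed.

Lemma tpow_snd x m : (tpow x m).2 =
  \sum_(i < m) lact (x.1 ^+ i) (ract x.2 (x.1 ^+ (m - i.+1))).
Proof.
elim: m => [|m IH]; first by rewrite big_ord0.
rewrite [LHS]/= IH tpow_fst big_ord_recl /= expr0 lact1 subn1 /= addrC.
by congr (_ + _); rewrite lact_sum; apply: eq_bigr => i _; rewrite exprS lactM.
Qed.

(* Moving [x.1 ^+ i] from the left to the right of each term changes it by a commutator. *)
Lemma tpow_snd_mod_commLD x m :
  commLD ((tpow x m).2 - ract x.2 (x.1 ^+ m.-1) *+ m).
Proof.
have -> : ract x.2 (x.1 ^+ m.-1) *+ m = \sum_(i < m) ract x.2 (x.1 ^+ m.-1).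
  by rewrite sumr_const card_ord.
rewrite tpow_snd -sumrB; apply: span_sum => i; apply: span_gen.
exists (x.1 ^+ i), (ract x.2 (x.1 ^+ (m - i.+1))); rewrite ractM -exprD.
by have -> : (m - i.+1 + i = m.-1)%N by have := ltn_ord i; lia.
Qed.

Lemma tpow_snd_central x m : Zc x.1 ->
  (tpow x m).2 = ract x.2 (x.1 ^+ m.-1) *+ m.
Proof.
move=> x1C; rewrite tpow_snd -[m in _ *+ m]card_ord -sumr_const.
apply: eq_bigr => i _.
apply/lfunP => b; rewrite lactE !ractE (commrX i (esym (x1C b))) mulrA -exprD.
by have -> : (m - i.+1 + i = m.-1)%N by have := ltn_ord i; lia.
Qed.

Lemma pairD x y : x + y = (x.1 + y.1, x.2 + y.2).
Proof. by []. Qed.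

Lemma pairB x y : x - y = (x.1 - y.1, x.2 - y.2).
Proof. by []. Qed.

Lemma pairZ k x : k *: x = (k *: x.1, k *: x.2).
Proof. by []. Qed.

Lemma tform_commutator t y x :
  tform (tmul t y - tmul y t) x = tform t (tmul y x - tmul x y).
Proof.
rewrite /tform /tmul /= !add_lfunE !opp_lfunE !add_lfunE !lactE !ractE !linearB /=.
ring.
Qed.

Lemma tform_nondegenerate y : (forall t, tform t y = 0) -> y = 0.
Proof.
move=> y0; have y1 : y.1 = 0.
  by apply: dual_vanish_eq0 => phi; have := y0 (0, phi); rewrite /tform /= raddf0 add0r.
have y2 : y.2 = 0.
  by apply/lfunP => b; have := y0 (b, 0); rewrite /tform /= !zero_lfunE addr0.
by case: y {y0} y1 y2 => ? ? /= -> ->.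
Qed.

Lemma perp_span (P : TE L -> Prop) x : perp P x -> perp (span_of P) x.
Proof.
apply: (span_kernel (f := fun t => tform t x : F^o)) => k t u.
by rewrite /tform /= linearP add_lfunE scale_lfunE /=; ring.
Qed.

Lemma ZT_iff x : ZT x <-> Zc x.1 /\ Ann (@Kcomm F L) x.2.
Proof.
split=> [xC | [x1C x2K] y].
  split=> [b|]; first by have [] := xC (b, 0).
  apply: Ann_span => _ [a [b ->]]; have [_ /lfunP /(_ b)] := xC (a, 0).
  rewrite !add_lfunE lactr0 ract0r zero_lfunE add0r addr0 ractE lactE => E.
  by rewrite linearB /= E subrr.
rewrite /tmul x1C addrC; congr (_, _ + _); apply/lfunP => b; rewrite lactE ractE.
  by apply/eqP; rewrite -subr_eq0 -linearB; apply/eqP/x2K/span_gen; exists y.1, b.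
by rewrite x1C.
Qed.

Lemma ZT_fst z : Zc z -> ZT (z, 0 : dual L).
Proof. by move=> zC; apply/ZT_iff; split=> // v _; rewrite zero_lfunE. Qed.

Lemma ZT_snd chi : Ann (@Kcomm F L) chi -> ZT (0 : L, chi).
Proof. by move=> chiK; apply/ZT_iff; split=> // y; rewrite mul0r mulr0. Qed.

Lemma perp_KT x : perp (@KT F L) x <-> ZT x.
Proof.
split=> [xK y | xC]; last first.
  apply: perp_span => _ [t [y ->]].
  by rewrite tform_commutator xC subrr /tform /= !linear0 zero_lfunE addr0.
apply/esym/eqP; rewrite -subr_eq0; apply/eqP/tform_nondegenerate => t.
by rewrite -tform_commutator; apply/xK/span_gen; exists t, y.
Qed.

Lemma perp_TnT0 p x : perp (TnT p 0) x <-> ZT x.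
Proof.
by rewrite -perp_KT /TnT expn0; split=> xK t tK; apply: xK; move: tK; rewrite tpow1.
Qed.

Lemma KT_fst x : KT x -> Kcomm x.1.
Proof.
apply: (span_linear (f := fst)) => [k u v //|_ [a [b ->]]].
by apply: span_gen; exists a.1, b.1.
Qed.

Lemma KT_pair d psi : Kcomm d -> commLD psi -> KT (d, psi).
Proof.
move=> Kd Cpsi; have -> : (d, psi) = (d, 0) + (0, psi) by rewrite pairD /= addr0 add0r.
apply: spanD.
  apply: (span_linear (f := fun d : L => (d, 0 : dual L))) Kd => [k u v|_ [a [b ->]]].
    by rewrite pairD pairZ /= scaler0 addr0.
  apply: span_gen; exists (a, 0), (b, 0).
  by rewrite pairB /= !lactr0 !ract0r !addr0 subrr.
apply: (span_linear (f := fun psi : dual L => (0 : L, psi))) Cpsi => [k u v|_ [a [phi ->]]].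
  by rewrite pairD pairZ /= scaler0 addr0.
apply: span_gen; exists (a, 0), (0, phi).
by rewrite pairB /= mulr0 mul0r subrr lact0r ractr0 addr0 add0r.
Qed.

Section PositiveCharacteristic.
Variable p : nat.
Hypothesis charFp : p \in [pchar F].

Lemma mulrn_pchar_dvd (V : lmodType F) (v : V) m : (p %| m)%N -> v *+ m = 0.
Proof. by rewrite (dvdn_pcharf charFp) -scaler_nat => /eqP ->; rewrite scale0r. Qed.

Lemma commLD_tpow_snd x m : (p %| m)%N -> commLD (tpow x m).2.
Proof.
by move=> pm; have := tpow_snd_mod_commLD x m; rewrite mulrn_pchar_dvd // subr0.
Qed.

Lemma tpow_central x m : Zc x.1 -> (p %| m)%N -> tpow x m = (x.1 ^+ m, 0).
Proof.
move=> x1C pm; rewrite -tpow_fst -(mulrn_pchar_dvd (ract x.2 (x.1 ^+ m.-1)) pm).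
by rewrite -tpow_snd_central //; case: tpow.
Qed.

Variable n : nat.
Hypothesis n_gt0 : (0 < n)%N.

Let pn_gt0 : (0 < p ^ n)%N.
Proof. by rewrite expn_gt0 prime_gt0 // (pcharf_prime charFp). Qed.

Let p_dvd_pn : (p %| p ^ n)%N.
Proof. by rewrite dvdn_exp. Qed.

Lemma TnT_iff y : TnT p n y <-> Tn p n y.1.
Proof.
rewrite /TnT /Tn -tpow_fst; split; first exact: KT_fst.
by case: (tpow y _) (commLD_tpow_snd y p_dvd_pn) => a phi /= Cphi Ka; exact: KT_pair.
Qed.

Lemma perp_TnT x : perp (TnT p n) x <-> x.1 = 0 /\ Ann (Tn p n) x.2.
Proof.
split=> [xT | [x1 x2T] t /TnT_iff tT]; last first.
  by rewrite /tform x1 raddf0 addr0; exact: x2T.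
split=> [|y yT].
  apply: dual_vanish_eq0 => phi; have := xT (0, phi); rewrite /tform /= raddf0 add0r.
  by apply; apply/TnT_iff => //=; rewrite /Tn expr0n eqn0Ngt pn_gt0; exact: span0.
by have := xT (y, 0); rewrite /tform /= zero_lfunE addr0; apply; exact/TnT_iff.
Qed.

Lemma perp_TnZT_snd x : perp (TnZT p n) x -> Ann (TnZ p n) x.2.
Proof.
move=> xT z [zC zn]; have := xT (z, 0); rewrite /tform /= zero_lfunE addr0; apply.
by split; [exact: ZT_fst | rewrite tpow_central //= zn].
Qed.

(* [(0, chi)] is central and squares to zero whenever [chi] kills [K(L)]. *)
Lemma perp_TnZT_fst x : perp (TnZT p n) x -> Kcomm x.1.
Proof.
move=> xT; apply: Kcomm_of_Ann => chi chiK.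
have := xT (0, chi); rewrite /tform /= raddf0 add0r; apply.
split; first exact: ZT_snd.
by rewrite tpow_central /= ?expr0n ?eqn0Ngt ?pn_gt0 // => y; rewrite mul0r mulr0.
Qed.

Lemma perp_TnZT x : x.1 = 0 -> Ann (TnZ p n) x.2 -> perp (TnZT p n) x.
Proof.
move=> x1 x2T t [/ZT_iff [t1C _] tn]; rewrite /tform x1 raddf0 addr0.
by apply: x2T; split; rewrite // -tpow_fst tn.
Qed.

Lemma quot_eq_perp_TnZT :
  quot_eq (@KT F L) (perp (TnZT p n)) (fun x => x.1 = 0 /\ Ann (TnZ p n) x.2).
Proof.
move=> x; split=> [[m mT xmK] | [m [m1 m2T] xmK]]; last first.
  by exists m => //; exact: perp_TnZT.
exists (0, m.2); first by split=> //=; exact: perp_TnZT_snd.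
have -> : x - (0, m.2) = (x - m) + (m.1, 0) by rewrite !pairB pairD /= subr0 subrK addr0.
apply: spanD xmK (KT_pair (perp_TnZT_fst mT) (span0 _)).
Qed.

Lemma perp_PnZT x : perp (PnZT p n) x <-> Ann (PnZ p n) x.2.
Proof.
split=> [xP y yP | x2P].
  have := xP (y, 0); rewrite /tform /= zero_lfunE addr0; apply.
  move: y yP; apply: (span_linear (f := fun y : L => (y, 0 : dual L))) => [k u v|_ [z zC ->]].
    by rewrite pairD pairZ /= scaler0 addr0.
  by apply: span_gen; exists (z, 0); [exact: ZT_fst | rewrite tpow_central].
apply: perp_span => _ [z /ZT_iff [zC _] ->].
rewrite tpow_central // /tform /= zero_lfunE addr0; apply/x2P/span_gen.
by exists z.1.
Qed.

End PositiveCharacteristic.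
End TrivialExtension.

Theorem theorem4p1 (F : fieldType) (L : falgType F) (p : nat)
  (charFp : p \in [pchar F]) :
  (* (1) *)
  (forall x : TE L, (perp (TnT p 0) x <-> ZT x) /\
                    (ZT x <-> Zc x.1 /\ Ann (@Kcomm F L) x.2)) /\
  (* (2) *)
  (forall n : nat, (1 <= n)%N -> forall x : TE L,
     perp (TnT p n) x <-> x.1 = 0 /\ Ann (Tn p n) x.2) /\
  (* (3) *)
  (forall n : nat, (1 <= n)%N ->
     quot_eq (@KT F L) (perp (TnZT p n))
             (fun x => x.1 = 0 /\ Ann (TnZ p n) x.2)) /\
  (* (4) *)
  (forall n : nat, (1 <= n)%N ->
     quot_eq (@KT F L) (perp (PnZT p n))
             (fun x => Ann (PnZ p n) x.2)).
Proof.
split=> [x|]; first by split; [exact: perp_TnT0 | exact: ZT_iff].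
split; first exact: perp_TnT charFp.
split; first exact: quot_eq_perp_TnZT charFp.
by move=> n n_gt0; apply: quot_eq_of_equiv; exact: perp_PnZT.
Qed.
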